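(* In the setting of the context, for the functions $S,E,I,R$ defined there, \[ S'(\infty)=E'(\infty)=I'(\infty)=R'(\infty)=0, \] where $f'(\infty):=\lim_{t\to\infty}f'(t)$.
   Context: Let $\beta,\gamma,\delta>0$ be constants and $\tilde S,\tilde E,\tilde I,\tilde R$ real numbers with $N:=\tilde S+\tilde E+\tilde I+\tilde R>0$. Standing assumptions: (A1) $\tilde I>0$; (A2) $\tilde E>(\gamma/\delta)\tilde I$; (A3) $\tilde S>\delta\tilde E/(\beta\tilde I)$; (A4) $\tilde R\ge 0$ and $N>\tilde S e^{(\beta/\gamma)\tilde R}+\tilde R$. Let $\alpha$ be the unique solution in $(\tilde R,N)$ of $x=N-\tilde S e^{(\beta/\gamma)\tilde R}e^{-(\beta/\gamma)x}$, and assume (A5) $\tilde S<(\gamma/\beta)e^{(\beta/\gamma)(\alpha-\tilde R)}$. Put $u_0:=e^{-(\beta/\gamma)\tilde R}$, $u_\infty:=e^{-(\beta/\gamma)\alpha}$. Let $\psi$ be the unique function, continuous and positive on $(u_\infty,u_0]$ and $C^1$ on $(u_\infty,u_0)$, satisfying $\psi'(u)\psi(u)-\frac{\gamma+\delta}{u}\psi(u)=-\delta\,\frac{\beta N-\beta\tilde S e^{(\beta/\gamma)\tilde R}u+\gamma\log u}{u}$ on $(u_\infty,u_0)$ and $\psi(u_0)=\beta\tilde I$. Let $\varphi(u):=\int_u^{u_0}\frac{d\xi}{\xi\psi(\xi)}$; $\varphi$ is a strictly decreasing continuous bijection from $(u_\infty,u_0]$ onto $[0,\infty)$, $C^1$ on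 $(u_\infty,u_0)$, with inverse $\varphi^{-1}:[0,\infty)\to(u_\infty,u_0]$. For $t\ge 0$ define $S(t)=\tilde S e^{(\beta/\gamma)\tilde R}\varphi^{-1}(t)$, $E(t)=\tilde E e^{-\delta t}+\tilde S e^{(\beta/\gamma)\tilde R}e^{-\delta t}\int_{\varphi^{-1}(t)}^{u_0}e^{\delta\varphi(v)}dv$, $I(t)=N-\tilde S e^{(\beta/\gamma)\tilde R}\varphi^{-1}(t)+\frac{\gamma}{\beta}\log\varphi^{-1}(t)-E(t)$, $R(t)=-\frac{\gamma}{\beta}\log\varphi^{-1}(t)$. *)

From Stdlib Require Import Reals.
From Coquelicot Require Import Coquelicot.
Open Scope R_scope.

Definition cont_on_Ioc (f : R -> R) (a b : R) : Prop :=
  forall u, a < u <= b ->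
    forall eps, 0 < eps -> exists del, 0 < del /\
      forall x, a < x <= b -> Rabs (x - u) < del -> Rabs (f x - f u) < eps.

Definition C1_on_Ioo (f : R -> R) (a b : R) : Prop :=
  forall u, a < u < b -> ex_derive f u /\ continuous (Derive f) u.

Definition phi_of (psi : R -> R) (u0 u : R) : R :=
  RInt (fun xi => / (xi * psi xi)) u u0.

Definition S_of (beta gamma St Rt : R) (phiinv : R -> R) (t : R) : R :=
  St * exp ((beta / gamma) * Rt) * phiinv t.

Definition E_of (beta gamma delta St Et Rt u0 : R) (psi phiinv : R -> R)
    (t : R) : R :=
  Et * exp (- delta * t)
  + St * exp ((beta / gamma) * Rt) * exp (- delta * t)
    * RInt (fun v => exp (delta * phi_of psi u0 v)) (phiinv t) u0.

Definition I_of (beta gamma delta St Et Rt N u0 : R) (psi phiinv : R -> R)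
    (t : R) : R :=
  N - St * exp ((beta / gamma) * Rt) * phiinv t
  + (gamma / beta) * ln (phiinv t)
  - E_of beta gamma delta St Et Rt u0 psi phiinv t.

Definition R_of (beta gamma : R) (phiinv : R -> R) (t : R) : R :=
  - (gamma / beta) * ln (phiinv t).

Definition deriv_at_infty_zero (f : R -> R) : Prop :=
  (forall t, 0 < t -> ex_derive f t) /\ is_lim (Derive f) p_infty 0.

From Stdlib Require Import Reals Lra Classical.
From Coquelicot Require Import Coquelicot.
Open Scope R_scope.

(* Along the trajectory u = phiinv t, which decreases to uinf as t -> +oo, one has
   phiinv' = - phiinv * psi (phiinv).  Hence S' and R' are multiples of
   phiinv t * psi (phiinv t) and of psi (phiinv t), E solves
   E' = - delta E + St e^((beta/gamma) Rt) phiinv t * psi (phiinv t), and I = N - S - R - E.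
   Everything thus reduces to psi u -> 0 as u -> uinf+, together with the fact that
   y' + delta y -> 0 forces y -> 0.  The integral phi of 1 / (u psi u) is unbounded near
   uinf, so psi takes arbitrarily small values there; and since the right-hand side of
   the ODE vanishes at uinf (this is the equation defining alpha), psi' > 0 wherever
   psi >= eps close to uinf, so psi cannot rise above eps again when moving towards uinf. *)

Lemma ball_R (x e y : R) : ball x e y <-> Rabs (y - x) < e.
Proof.
  unfold ball; simpl; unfold AbsRing_ball, abs, minus, plus, opp; simpl; tauto.
Qed.

Lemma is_lim_scal_l_0 (f : R -> R) (a : R) (x : Rbar) :
  is_lim f x 0 -> is_lim (fun y => a * f y) x 0.
Proof.
  intros Hf. generalize (is_lim_scal_l f a x 0 Hf); simpl.
  now rewrite Rmult_0_r.
Qed.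

Lemma is_lim_plus_0 (f g : R -> R) (x : Rbar) :
  is_lim f x 0 -> is_lim g x 0 -> is_lim (fun y => f y + g y) x 0.
Proof.
  intros Hf Hg. generalize (is_lim_plus' f g x 0 0 Hf Hg).
  now rewrite Rplus_0_r.
Qed.

Lemma deriv_at_infty_zero_intro (f df : R -> R) :
  (forall t, 0 < t -> is_derive f t (df t)) -> is_lim df p_infty 0 ->
  deriv_at_infty_zero f.
Proof.
  intros Hf Hlim. split; [intros t Ht; eexists; now apply Hf|].
  apply (is_lim_ext_loc df); [|exact Hlim].
  exists 0. intros t Ht. symmetry. now apply is_derive_unique, Hf.
Qed.

Lemma deriv_at_infty_zero_const_sub3 (a : R) (f g h k : R -> R) :
  (forall t, k t = a - f t - g t - h t) ->
  deriv_at_infty_zero f -> deriv_at_infty_zero g -> deriv_at_infty_zero h ->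
  deriv_at_infty_zero k.
Proof.
  intros Hk [Hf Lf] [Hg Lg] [Hh Lh].
  apply (deriv_at_infty_zero_intro k (fun t => - (Derive f t + Derive g t + Derive h t))).
  - intros t Ht. apply (is_derive_ext (fun t => a - f t - g t - h t)); [intros; now rewrite Hk|].
    auto_derive; [repeat split; [apply Hf | apply Hg | apply Hh]; exact Ht|].
    change (fun x => f x) with f; change (fun x => g x) with g; change (fun x => h x) with h.
    ring.
  - generalize (is_lim_opp _ _ _ (is_lim_plus_0 _ _ _ (is_lim_plus_0 _ _ _ Lf Lg) Lh)).
    simpl. now rewrite Ropp_0.
Qed.

Lemma continuity_pt_inverse_decreasing (f g : R -> R) (a b t del : R) :
  0 < del ->
  (forall x y, a < x -> x < y -> y < b -> f y < f x) ->
  (forall s, Rabs (s - t) < del -> a < g s < b /\ f (g s) = s) ->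
  continuity_pt g t.
Proof.
  intros Hdel Hdecr Hinv eps Heps.
  assert (Hle : forall x y, a < x -> x <= y -> y < b -> f y <= f x).
  { intros x y Hx Hxy Hy. destruct (Rle_lt_or_eq_dec _ _ Hxy) as [Hlt|<-].
    - left; now apply Hdecr.
    - now right. }
  destruct (Hinv t) as [[Ha Hb] Hft]; [rewrite Rminus_diag, Rabs_R0; lra|].
  set (e := Rmin eps (Rmin (g t - a) (b - g t)) / 2).
  assert (He : 0 < e /\ e < eps /\ e < g t - a /\ e < b - g t).
  { assert (0 < Rmin eps (Rmin (g t - a) (b - g t))) by (repeat apply Rmin_glb_lt; lra).
    pose proof (Rmin_l eps (Rmin (g t - a) (b - g t))).
    pose proof (Rmin_r eps (Rmin (g t - a) (b - g t))).
    pose proof (Rmin_l (g t - a) (b - g t)). pose proof (Rmin_r (g t - a) (b - g t)).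
    unfold e; lra. }
  assert (Hlo : t < f (g t - e)) by (rewrite <- Hft at 1; apply Hdecr; lra).
  assert (Hhi : f (g t + e) < t) by (rewrite <- Hft at 2; apply Hdecr; lra).
  exists (Rmin del (Rmin (f (g t - e) - t) (t - f (g t + e)))).
  split; [repeat apply Rmin_glb_lt; lra|].
  intros s [_ Hs]; simpl in Hs; unfold Rdist in Hs.
  pose proof (Rmin_l del (Rmin (f (g t - e) - t) (t - f (g t + e)))).
  pose proof (Rmin_r del (Rmin (f (g t - e) - t) (t - f (g t + e)))).
  pose proof (Rmin_l (f (g t - e) - t) (t - f (g t + e))).
  pose proof (Rmin_r (f (g t - e) - t) (t - f (g t + e))).
  destruct (Hinv s) as [[Has Hbs] Hfs]; [lra|].
  apply Rabs_def2 in Hs.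
  apply Rabs_def1.
  - destruct (Rlt_le_dec (g s) (g t + e)) as [C|C]; [lra|].
    pose proof (Hle (g t + e) (g s) ltac:(lra) C Hbs). lra.
  - destruct (Rlt_le_dec (g t - e) (g s)) as [C|C]; [lra|].
    pose proof (Hle (g s) (g t - e) Has C ltac:(lra)). lra.
Qed.

Lemma is_derive_local_inverse (f g : R -> R) (t l del : R) :
  0 < del -> l <> 0 -> is_derive f (g t) l -> continuity_pt g t ->
  (forall s, Rabs (s - t) < del -> f (g s) = s) ->
  is_derive g t (/ l).
Proof.
  intros Hdel Hl Hf Hg Hinv. apply is_derive_Reals in Hf. apply is_derive_Reals.
  set (p := g t) in *.
  (* the difference quotient of f at p, completed by its limit l, is continuous at p *)
  set (q := fun y => if Req_EM_T y p then l else (f y - f p) / (y - p)).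
  assert (Hqp : q p = l) by (unfold q; destruct (Req_EM_T p p); congruence).
  assert (Hq : continuity_pt q p).
  { intros eps Heps. destruct (Hf eps Heps) as [d Hd].
    exists d; split; [apply cond_pos|]. intros y [_ Hy]; simpl in *; unfold Rdist in *.
    rewrite Hqp. unfold q. destruct (Req_EM_T y p) as [->|Hyp].
    - now rewrite Rminus_diag, Rabs_R0.
    - specialize (Hd (y - p) ltac:(lra) Hy). now replace (p + (y - p)) with y in Hd by ring. }
  assert (Hqg : continuity_pt (comp (/ q) g) t).
  { apply continuity_pt_comp; [exact Hg|]. apply continuity_pt_inv; [exact Hq|].
    change (q p <> 0). now rewrite Hqp. }
  assert (Hfp : f p = t) by (apply Hinv; rewrite Rminus_diag, Rabs_R0; lra).
  intros eps Heps. destruct (Hqg eps Heps) as [d [Hd Hc]].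
  exists (mkposreal _ (Rmin_pos _ _ Hd Hdel)). intros h Hh Hhd; simpl in Hhd.
  pose proof (Rmin_l d del). pose proof (Rmin_r d del).
  assert (Hfh : f (g (t + h)) = t + h) by (apply Hinv; now replace (t + h - t) with h by ring; lra).
  assert (Hne : g (t + h) <> p) by (intros E; rewrite E in Hfh; lra).
  specialize (Hc (t + h)). simpl in Hc; unfold comp, inv_fct, Rdist in Hc.
  fold p in Hc. rewrite Hqp in Hc. unfold q in Hc.
  destruct (Req_EM_T (g (t + h)) p) as [E|_]; [congruence|].
  rewrite Hfh, Hfp in Hc.
  replace ((g (t + h) - g t) / h) with (/ ((t + h - t) / (g (t + h) - p))).
  - apply Hc. split; [split; [exact I| intros E; apply Hh; lra]|].
    replace (t + h - t) with h by ring. lra.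
  - fold p. field. split; [exact Hh|]. intros E; apply Hne; lra.
Qed.

Lemma lt_of_Derive_pos_above (f : R -> R) (c u v : R) :
  u <= v ->
  (forall x, u <= x <= v -> continuity_pt f x) ->
  (forall x, u <= x < v -> c <= f x -> ex_derive f x /\ 0 < Derive f x) ->
  f v < c -> f u < c.
Proof.
  intros Huv Hcont Hder Hv.
  destruct (Rlt_le_dec (f u) c) as [|Hu]; [assumption|exfalso].
  destruct (continuity_ab_maj f u v Huv Hcont) as [m [Hmax Hm]].
  assert (Hfm : f u <= f m) by (apply Hmax; lra).
  assert (Hmv : m < v).
  { destruct (Rle_lt_or_eq_dec _ _ (proj2 Hm)) as [|E]; [assumption|rewrite E in Hfm; lra]. }
  destruct (Hder m ltac:(lra) ltac:(lra)) as [[l Hl] Hpos].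
  rewrite (is_derive_unique _ _ _ Hl) in Hpos.
  apply is_derive_Reals in Hl. destruct (Hl l Hpos) as [d Hd].
  set (h := Rmin (d / 2) ((v - m) / 2)).
  assert (Hh : 0 < h /\ h < d /\ h <= v - m).
  { pose proof (cond_pos d). pose proof (Rmin_l (d / 2) ((v - m) / 2)).
    pose proof (Rmin_r (d / 2) ((v - m) / 2)).
    assert (0 < h) by (apply Rmin_glb_lt; lra). unfold h in *; lra. }
  specialize (Hd h (Rgt_not_eq _ _ (proj1 Hh)) ltac:(rewrite Rabs_pos_eq; lra)).
  apply Rabs_def2 in Hd.
  assert (Hquot : 0 < (f (m + h) - f m) / h) by lra.
  assert (f m < f (m + h)).
  { apply Rlt_0_minus. replace (f (m + h) - f m) with ((f (m + h) - f m) / h * h)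
      by (field; lra). apply Rmult_lt_0_compat; lra. }
  pose proof (Hmax (m + h) ltac:(lra)). lra.
Qed.

Lemma deriv_plus_scal_le (y dy : R -> R) (d m a b : R) :
  0 < d -> a <= b ->
  (forall t, a <= t <= b -> is_derive y t (dy t)) ->
  (forall t, a <= t <= b -> dy t + d * y t <= m) ->
  y b - m / d <= exp (- d * (b - a)) * (y a - m / d).
Proof.
  intros Hd Hab Hy Hm.
  (* integrating factor: w' = exp (d t) * (dy + d y - m) <= 0 *)
  set (w := fun t => exp (d * t) * (y t - m / d)).
  assert (Hw : forall t, a <= t <= b ->
    is_derive w t (exp (d * t) * (dy t + d * y t - m))).
  { intros t Ht. unfold w. auto_derive.
    - eexists; apply Hy, Ht.
    - change (Derive (fun x => y x) t) with (Derive y t).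
      rewrite (is_derive_unique _ _ _ (Hy t Ht)). field. lra. }
  destruct (MVT_gen w a b (fun t => exp (d * t) * (dy t + d * y t - m))) as [c [Hc Hwc]].
  - intros t Ht. rewrite Rmin_left, Rmax_right in Ht by lra. apply Hw; lra.
  - intros t Ht. rewrite Rmin_left, Rmax_right in Ht by lra.
    apply continuity_pt_filterlim, (ex_derive_continuous (V := R_NormedModule)).
    eexists; now apply Hw.
  - rewrite Rmin_left, Rmax_right in Hc by lra.
    assert (Hwab : w b <= w a).
    { assert (exp (d * c) * (dy c + d * y c - m) <= 0).
      { pose proof (exp_pos (d * c)). pose proof (Hm c Hc). nra. }
      nra. }
    unfold w in Hwab.
    replace (y b - m / d) with (exp (- d * b) * (exp (d * b) * (y b - m / d))).
    + replace (- d * (b - a)) with (- d * b + d * a) by ring. rewrite exp_plus, Rmult_assoc.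
      apply Rmult_le_compat_l; [left; apply exp_pos | exact Hwab].
    + rewrite <- Rmult_assoc, <- exp_plus. replace (- d * b + d * b) with 0 by ring.
      rewrite exp_0. ring.
Qed.

Lemma abs_le_of_deriv_plus_scal (y dy : R -> R) (d m a b : R) :
  0 < d -> a <= b ->
  (forall t, a <= t <= b -> is_derive y t (dy t)) ->
  (forall t, a <= t <= b -> Rabs (dy t + d * y t) <= m) ->
  Rabs (y b) <= m / d + exp (- d * (b - a)) * Rabs (y a).
Proof.
  intros Hd Hab Hy Hm.
  assert (Hup := deriv_plus_scal_le y dy d m a b Hd Hab Hy
    (fun t Ht => Rle_trans _ _ _ (Rle_abs _) (Hm t Ht))).
  assert (Hlo := deriv_plus_scal_le (fun t => - y t) (fun t => - dy t) d m a b Hd Hab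
    (fun t Ht => is_derive_opp y t (dy t) (Hy t Ht))).
  specialize (Hlo (fun t Ht => ltac:(pose proof (Hm t Ht) as Hmt; rewrite <- Rabs_Ropp in Hmt;
    pose proof (Rle_abs (- (dy t + d * y t))); lra))).
  set (e := exp (- d * (b - a))) in *.
  assert (He : 0 < e) by apply exp_pos.
  assert (0 <= m / d).
  { apply Rle_mult_inv_pos; [|exact Hd]. eapply Rle_trans; [apply Rabs_pos | apply (Hm a); lra]. }
  pose proof (Rle_abs (y a)). pose proof (Rle_abs (- y a)). rewrite Rabs_Ropp in *.
  apply Rabs_le; split; nra.
Qed.

Lemma exp_decay_eventually_lt (d a C eps : R) :
  0 < d -> 0 <= C -> 0 < eps ->
  exists T, forall b, T < b -> exp (- d * (b - a)) * C < eps.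
Proof.
  intros Hd HC Heps.
  assert (Hr : 0 < eps / (C + 1)) by (apply Rdiv_lt_0_compat; lra).
  exists (a - ln (eps / (C + 1)) / d). intros b Hb.
  assert (exp (- d * (b - a)) < eps / (C + 1)).
  { rewrite <- (exp_ln _ Hr). apply exp_increasing.
    apply (Rmult_lt_compat_l d) in Hb; [|exact Hd].
    replace (d * (a - ln (eps / (C + 1)) / d)) with (d * a - ln (eps / (C + 1))) in Hb
      by (field; lra).
    lra. }
  apply Rle_lt_trans with (exp (- d * (b - a)) * (C + 1)).
  - apply Rmult_le_compat_l; [left; apply exp_pos | lra].
  - apply (Rmult_lt_compat_r (C + 1)) in H; [|lra].
    now replace (eps / (C + 1) * (C + 1)) with eps in H by (field; lra).
Qed.

Lemma is_lim_0_of_deriv_plus_scal (y dy : R -> R) (d T0 : R) :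
  0 < d ->
  (forall t, T0 < t -> is_derive y t (dy t)) ->
  is_lim (fun t => dy t + d * y t) p_infty 0 ->
  is_lim y p_infty 0.
Proof.
  intros Hd Hy Hlim. apply is_lim_spec. intros [eps Heps]; simpl.
  assert (Hde : 0 < d * eps / 2) by (apply Rdiv_lt_0_compat; [nra|lra]).
  destruct (proj2 (is_lim_spec _ _ _) Hlim (mkposreal _ Hde)) as [M HM]; simpl in HM.
  set (a := Rmax M T0 + 1).
  assert (Ha : M < a /\ T0 < a).
  { pose proof (Rmax_l M T0). pose proof (Rmax_r M T0). unfold a; lra. }
  destruct (exp_decay_eventually_lt d a (Rabs (y a)) (eps / 2) Hd (Rabs_pos _) ltac:(lra))
    as [T HT].
  exists (Rmax a T). intros b Hb.
  pose proof (Rmax_l a T). pose proof (Rmax_r a T).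
  assert (Hb' := abs_le_of_deriv_plus_scal y dy d (d * eps / 2) a b Hd ltac:(lra)).
  specialize (Hb' (fun t Ht => Hy t ltac:(lra))).
  specialize (Hb' (fun t Ht => ltac:(left; rewrite <- (Rminus_0_r (_ + _)); apply HM; lra))).
  specialize (HT b ltac:(lra)).
  replace (d * eps / 2 / d) with (eps / 2) in Hb' by (field; lra).
  rewrite Rminus_0_r. lra.
Qed.

Section Phi_inverse.

Variables (uinf u0 : R) (psi phiinv : R -> R).
Hypothesis uinf_pos : 0 < uinf.
Hypothesis uinf_lt_u0 : uinf < u0.
Hypothesis psi_cont : cont_on_Ioc psi uinf u0.
Hypothesis psi_pos : forall u, uinf < u <= u0 -> 0 < psi u.
Hypothesis phiinv_spec :
  forall t, 0 <= t -> uinf < phiinv t <= u0 /\ phi_of psi u0 (phiinv t) = t.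

(* cont_on_Ioc only gives continuity of psi at u0 from the left; freezing psi to the
   right of u0 makes the integrand continuous on (uinf, +oo), as the FTC requires. *)
Definition psi_ext (x : R) : R := psi (Rmin x u0).

Definition phi_integrand (x : R) : R := / (x * psi_ext x).

Definition Phi (u : R) : R := RInt phi_integrand u u0.

Lemma psi_ext_pos x : uinf < x -> 0 < psi_ext x.
Proof.
  intros Hx. apply psi_pos. split; [apply Rmin_glb_lt; lra | apply Rmin_r].
Qed.

Lemma psi_ext_continuous x : uinf < x -> continuity_pt psi_ext x.
Proof.
  intros Hx eps Heps. destruct (Rle_lt_dec x u0) as [Hxu|Hxu].
  - destruct (psi_cont x (conj Hx Hxu) eps Heps) as [del [Hdel H]].
    exists (Rmin del (x - uinf)). split; [apply Rmin_pos; lra|].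
    intros y [_ Hy]; simpl in *; unfold Rdist in *.
    pose proof (Rmin_l del (x - uinf)). pose proof (Rmin_r del (x - uinf)).
    apply Rabs_def2 in Hy.
    unfold psi_ext. rewrite (Rmin_left x u0 Hxu).
    apply H; [split; [apply Rmin_glb_lt; lra | apply Rmin_r]|].
    unfold Rmin. destruct (Rle_dec y u0); apply Rabs_def1; lra.
  - exists (x - u0). split; [lra|]. intros y [_ Hy]; simpl in *; unfold Rdist in *.
    apply Rabs_def2 in Hy. unfold psi_ext. rewrite !Rmin_right by lra.
    now rewrite Rminus_diag, Rabs_R0.
Qed.

Lemma phi_integrand_pos x : uinf < x -> 0 < phi_integrand x.
Proof.
  intros Hx. apply Rinv_0_lt_compat, Rmult_lt_0_compat; [lra|now apply psi_ext_pos].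
Qed.

Lemma phi_integrand_continuous x : uinf < x -> continuous phi_integrand x.
Proof.
  intros Hx. apply continuity_pt_filterlim, (continuity_pt_inv (fun x => x * psi_ext x)).
  - apply (continuity_pt_mult (fun x => x));
      [apply continuity_pt_id | now apply psi_ext_continuous].
  - apply Rgt_not_eq, Rmult_lt_0_compat; [lra|now apply psi_ext_pos].
Qed.

Lemma ex_RInt_phi_integrand a b : uinf < a -> uinf < b -> ex_RInt phi_integrand a b.
Proof.
  intros Ha Hb. apply (ex_RInt_continuous (V := R_CompleteNormedModule)).
  intros z [Hz _]. apply phi_integrand_continuous.
  eapply Rlt_le_trans; [|exact Hz]. now apply Rmin_glb_lt.
Qed.

Lemma is_derive_Phi x : uinf < x -> is_derive Phi x (- phi_integrand x).
Proof.
  intros Hx. apply (is_derive_RInt' phi_integrand Phi x u0).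
  - exists (mkposreal _ (proj2 (Rlt_0_minus _ _) Hx)). intros y Hy. apply ball_R in Hy.
    change (Rabs (y - x) < x - uinf) in Hy.
    apply Rabs_def2 in Hy.
    apply (RInt_correct (V := R_CompleteNormedModule)), ex_RInt_phi_integrand; lra.
  - now apply phi_integrand_continuous.
Qed.

Lemma Phi_decreasing x y : uinf < x -> x < y -> Phi y < Phi x.
Proof.
  intros Hx Hxy. unfold Phi.
  rewrite <- (RInt_Chasles phi_integrand x y u0) by (apply ex_RInt_phi_integrand; lra).
  assert (0 < RInt phi_integrand x y).
  { apply RInt_gt_0; [exact Hxy| |].
    - intros z Hz; apply phi_integrand_pos; lra.
    - intros z Hz; apply phi_integrand_continuous; lra. }
  change (plus _ _) with (RInt phi_integrand x y + RInt phi_integrand y u0). lra.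
Qed.

Lemma Phi_u0 : Phi u0 = 0.
Proof. unfold Phi. now rewrite RInt_point. Qed.

Lemma phi_of_eq_Phi u : u <= u0 -> phi_of psi u0 u = Phi u.
Proof.
  intros Hu. apply RInt_ext. intros x Hx. rewrite Rmax_right in Hx by exact Hu.
  unfold phi_integrand, psi_ext. now rewrite Rmin_left by lra.
Qed.

Lemma phiinv_range t : 0 < t -> uinf < phiinv t < u0 /\ Phi (phiinv t) = t.
Proof.
  intros Ht. destruct (phiinv_spec t) as [[H1 H2] H3]; [lra|].
  rewrite phi_of_eq_Phi in H3 by exact H2.
  split; [split; [exact H1|] | exact H3].
  destruct H2 as [H2|H2]; [exact H2|]. rewrite H2, Phi_u0 in H3. lra.
Qed.

Lemma phiinv_continuous t : 0 < t -> continuity_pt phiinv t.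
Proof.
  intros Ht. apply (continuity_pt_inverse_decreasing Phi phiinv uinf u0 t t Ht).
  - intros x y Hx Hxy _. now apply Phi_decreasing.
  - intros s Hs. apply Rabs_def2 in Hs. apply phiinv_range. lra.
Qed.

Lemma is_derive_phiinv t : 0 < t -> is_derive phiinv t (- (phiinv t * psi (phiinv t))).
Proof.
  intros Ht. destruct (phiinv_range t Ht) as [Hp _].
  assert (Hpsi : psi_ext (phiinv t) = psi (phiinv t)).
  { unfold psi_ext. now rewrite Rmin_left by lra. }
  assert (0 < psi (phiinv t)) by (rewrite <- Hpsi; apply psi_ext_pos; lra).
  replace (- (phiinv t * psi (phiinv t))) with (/ (- phi_integrand (phiinv t)))
    by (unfold phi_integrand; rewrite Hpsi; field; split; lra).
  apply (is_derive_local_inverse Phi phiinv t _ t Ht).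
  - apply Rlt_not_eq. pose proof (phi_integrand_pos (phiinv t) (proj1 Hp)). lra.
  - apply is_derive_Phi, Hp.
  - now apply phiinv_continuous.
  - intros s Hs. apply Rabs_def2 in Hs. apply phiinv_range. lra.
Qed.

Lemma phiinv_lim : filterlim phiinv (Rbar_locally p_infty) (at_right uinf).
Proof.
  intros P [d HP]. set (a := uinf + d / 2).
  assert (Ha : uinf < a) by (unfold a; pose proof (cond_pos d); lra).
  exists (Rmax 0 (Phi a)). intros t Ht.
  pose proof (Rmax_l 0 (Phi a)). pose proof (Rmax_r 0 (Phi a)).
  destruct (phiinv_range t ltac:(lra)) as [[H1 _] H2].
  apply HP; [|exact H1]. apply ball_R. pose proof (cond_pos d). apply Rabs_def1; [|lra].
  destruct (Rlt_le_dec (phiinv t) a) as [|C]; [unfold a in *; lra|].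
  destruct (Rle_lt_or_eq_dec _ _ C) as [C'|C'].
  - pose proof (Phi_decreasing a (phiinv t) Ha C'). lra.
  - rewrite <- C' in H2. lra.
Qed.


Lemma Phi_le_of_psi_ge e w : 0 < e -> uinf < w <= u0 ->
  (forall a, uinf < a < w -> e <= psi a) ->
  forall q, uinf < q -> Phi q <= (w - uinf) / (uinf * e) + Phi w.
Proof.
  intros He Hw Hge q Hq.
  assert (0 <= (w - uinf) / (uinf * e)).
  { apply Rle_mult_inv_pos; [lra|]. now apply Rmult_lt_0_compat. }
  destruct (Rlt_le_dec q w) as [Hqw|Hwq].
  2: { destruct (Rle_lt_or_eq_dec _ _ Hwq) as [Hlt|<-]; [|lra].
       pose proof (Phi_decreasing w q ltac:(lra) Hlt). lra. }
  unfold Phi at 1.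
  rewrite <- (RInt_Chasles phi_integrand q w u0) by (apply ex_RInt_phi_integrand; lra).
  change (plus _ _) with (RInt phi_integrand q w + Phi w).
  assert (Hle : RInt phi_integrand q w <= RInt (fun _ => / (uinf * e)) q w).
  { apply RInt_le; [lra | apply ex_RInt_phi_integrand; lra | apply ex_RInt_const |].
    intros x Hx. apply Rinv_le_contravar; [now apply Rmult_lt_0_compat|].
    unfold psi_ext. rewrite Rmin_left by lra.
    apply Rmult_le_compat; try lra. apply Hge; lra. }
  rewrite RInt_const in Hle.
  change (scal (w - q) (/ (uinf * e))) with ((w - q) / (uinf * e)) in Hle.
  assert ((w - q) / (uinf * e) <= (w - uinf) / (uinf * e)).
  { apply Rmult_le_compat_r; [left; apply Rinv_0_lt_compat, Rmult_lt_0_compat|]; lra. }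
  lra.
Qed.

(* Phi (phiinv t) = t is unbounded, so psi cannot stay away from 0 near uinf. *)
Lemma psi_somewhere_small e w : 0 < e -> uinf < w <= u0 ->
  exists a, uinf < a < w /\ psi a < e.
Proof.
  intros He Hw. apply not_all_not_ex. intros Hnot.
  assert (Hge : forall a, uinf < a < w -> e <= psi a).
  { intros a Ha. destruct (Rlt_le_dec (psi a) e) as [C|C]; [|exact C].
    exfalso. now apply (Hnot a). }
  set (B := (w - uinf) / (uinf * e) + Phi w).
  destruct (phiinv_range (Rmax 0 B + 1)) as [[Hq _] HPhi].
  { pose proof (Rmax_l 0 B); lra. }
  pose proof (Phi_le_of_psi_ge e w He Hw Hge _ Hq). pose proof (Rmax_r 0 B).
  unfold B in *. lra.
Qed.

Section Vanishing.

Variables (k : R) (G : R -> R).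
Hypothesis k_pos : 0 < k.
Hypothesis G_lim : is_lim G uinf 0.
Hypothesis psi_derivable : forall u, uinf < u < u0 -> ex_derive psi u.
Hypothesis psi_ode :
  forall u, uinf < u < u0 -> Derive psi u * psi u * u = k * psi u - G u.

Lemma Derive_psi_pos u eps : uinf < u < u0 -> eps <= psi u ->
  Rabs (G u) < k * eps -> 0 < Derive psi u.
Proof.
  intros Hu Heps HG. apply Rabs_def2 in HG.
  assert (Hp : 0 < psi u * u) by (apply Rmult_lt_0_compat; [apply psi_pos|]; lra).
  apply (Rmult_lt_reg_r (psi u * u)); [exact Hp|].
  rewrite Rmult_0_l, <- Rmult_assoc, psi_ode by exact Hu.
  assert (k * eps <= k * psi u) by (apply Rmult_le_compat_l; lra). lra.
Qed.

Lemma psi_lim : filterlim psi (at_right uinf) (locally 0).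
Proof.
  intros P [eps HP].
  assert (Hke : 0 < k * eps) by (apply Rmult_lt_0_compat; [exact k_pos | apply cond_pos]).
  destruct (proj2 (is_lim_spec _ _ _) G_lim (mkposreal _ Hke)) as [d Hd]; simpl in Hd.
  set (w := Rmin (uinf + d / 2) u0).
  assert (Hw : uinf < w <= u0 /\ w < uinf + d).
  { pose proof (cond_pos d). pose proof (Rmin_l (uinf + d / 2) u0).
    pose proof (Rmin_r (uinf + d / 2) u0).
    assert (uinf < w) by (unfold w; apply Rmin_glb_lt; lra). unfold w in *; lra. }
  destruct (psi_somewhere_small eps w (cond_pos eps) (proj1 Hw)) as [a [Ha Hpa]].
  exists (mkposreal _ (proj2 (Rlt_0_minus _ _) (proj1 Ha))).
  intros u Hu Hu'. apply ball_R in Hu. change (Rabs (u - uinf) < a - uinf) in Hu.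
  apply Rabs_def2 in Hu.
  apply HP, ball_R. rewrite Rminus_0_r.
  assert (0 < psi u) by (apply psi_pos; lra).
  assert (psi u < eps).
  { apply (lt_of_Derive_pos_above psi eps u a); [lra | | | exact Hpa].
    - intros x Hx. apply continuity_pt_filterlim, (ex_derive_continuous (V := R_NormedModule)).
      apply psi_derivable; lra.
    - intros x Hx Hex. split; [apply psi_derivable; lra|].
      apply (Derive_psi_pos x eps); [lra | exact Hex|].
      rewrite <- (Rminus_0_r (G x)). apply Hd; [apply ball_R; apply Rabs_def1 | ]; lra. }
  rewrite Rabs_pos_eq; lra.
Qed.

End Vanishing.


Section SEIR.

Hypothesis psi_vanishes : filterlim psi (at_right uinf) (locally 0).

Lemma psi_phiinv_lim : is_lim (fun t => psi (phiinv t)) p_infty 0.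
Proof. exact (filterlim_comp _ _ _ phiinv psi _ _ _ phiinv_lim psi_vanishes). Qed.

Lemma phiinv_psi_phiinv_lim : is_lim (fun t => phiinv t * psi (phiinv t)) p_infty 0.
Proof.
  assert (Hp : is_lim phiinv p_infty uinf).
  { exact (filterlim_filter_le_2 _ (filter_le_within _) phiinv_lim). }
  generalize (is_lim_mult _ _ _ _ _ Hp psi_phiinv_lim I). simpl.
  now rewrite Rmult_0_r.
Qed.

Lemma Derive_phiinv t : 0 < t -> Derive phiinv t = - (phiinv t * psi (phiinv t)).
Proof. intros Ht. now apply is_derive_unique, is_derive_phiinv. Qed.

Variables beta gamma delta St Et Rt N : R.
Hypothesis delta_pos : 0 < delta.

Let c := St * exp ((beta / gamma) * Rt).

Definition E_integral (x : R) : R := RInt (fun v => exp (delta * Phi v)) x u0.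

Lemma exp_Phi_continuous v : uinf < v -> continuous (fun v => exp (delta * Phi v)) v.
Proof.
  intros Hv. apply (ex_derive_continuous (V := R_NormedModule)).
  auto_derive. eexists; now apply is_derive_Phi.
Qed.

Lemma is_derive_E_integral x : uinf < x -> is_derive E_integral x (- exp (delta * Phi x)).
Proof.
  intros Hx. apply (is_derive_RInt' (fun v => exp (delta * Phi v)) E_integral x u0).
  - exists (mkposreal _ (proj2 (Rlt_0_minus _ _) Hx)). intros y Hy. apply ball_R in Hy.
    change (Rabs (y - x) < x - uinf) in Hy. apply Rabs_def2 in Hy.
    apply (RInt_correct (V := R_CompleteNormedModule)).
    apply (ex_RInt_continuous (V := R_CompleteNormedModule)).
    intros z [Hz _]. apply exp_Phi_continuous.
    eapply Rlt_le_trans; [|exact Hz]. apply Rmin_glb_lt; lra.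
  - now apply exp_Phi_continuous.
Qed.

Lemma E_of_eq t : 0 < t -> E_of beta gamma delta St Et Rt u0 psi phiinv t
  = Et * exp (- delta * t) + c * exp (- delta * t) * E_integral (phiinv t).
Proof.
  intros Ht. destruct (phiinv_range t Ht) as [Hp _].
  unfold E_of, E_integral. do 2 f_equal. apply RInt_ext. intros v Hv.
  rewrite Rmin_left, Rmax_right in Hv by lra. now rewrite phi_of_eq_Phi by lra.
Qed.

Lemma is_derive_E t : 0 < t -> is_derive (E_of beta gamma delta St Et Rt u0 psi phiinv) t
  (- delta * E_of beta gamma delta St Et Rt u0 psi phiinv t + c * (phiinv t * psi (phiinv t))).
Proof.
  intros Ht. destruct (phiinv_range t Ht) as [Hp HPhi].
  apply (is_derive_ext_loc
    (fun s => Et * exp (- delta * s) + c * exp (- delta * s) * E_integral (phiinv s))).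
  { exists (mkposreal t Ht). intros s Hs. apply ball_R in Hs. change (Rabs (s - t) < t) in Hs.
    apply Rabs_def2 in Hs. symmetry. apply E_of_eq. lra. }
  rewrite E_of_eq by exact Ht. auto_derive.
  - split; [|split; [|exact I]]; eexists.
    + apply is_derive_E_integral, Hp.
    + apply is_derive_phiinv, Ht.
  - rewrite Derive_phiinv by exact Ht.
    change (Derive (fun x => E_integral x)) with (Derive E_integral).
    rewrite (is_derive_unique _ _ _ (is_derive_E_integral _ (proj1 Hp))), HPhi.
    replace (exp (delta * t)) with (/ exp (- delta * t))
      by (rewrite <- exp_Ropp; f_equal; ring).
    field. apply Rgt_not_eq, exp_pos.
Qed.

Lemma deriv_at_infty_zero_S : deriv_at_infty_zero (S_of beta gamma St Rt phiinv).
Proof.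
  apply (deriv_at_infty_zero_intro _ (fun t => - c * (phiinv t * psi (phiinv t)))).
  - intros t Ht. unfold S_of. auto_derive; [eexists; now apply is_derive_phiinv|].
    rewrite Derive_phiinv by exact Ht. fold c. ring.
  - apply is_lim_scal_l_0, phiinv_psi_phiinv_lim.
Qed.

Lemma deriv_at_infty_zero_R : deriv_at_infty_zero (R_of beta gamma phiinv).
Proof.
  apply (deriv_at_infty_zero_intro _ (fun t => gamma / beta * psi (phiinv t))).
  - intros t Ht. destruct (phiinv_range t Ht) as [Hp _].
    unfold R_of. auto_derive.
    { split; [eexists; now apply is_derive_phiinv | split; [lra|exact I]]. }
    rewrite Derive_phiinv by exact Ht. set (k := gamma / beta). field. apply Rgt_not_eq; lra.
  - apply is_lim_scal_l_0, psi_phiinv_lim.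
Qed.

Lemma deriv_at_infty_zero_E : deriv_at_infty_zero (E_of beta gamma delta St Et Rt u0 psi phiinv).
Proof.
  set (E := E_of beta gamma delta St Et Rt u0 psi phiinv).
  assert (Hforcing : is_lim (fun t => c * (phiinv t * psi (phiinv t))) p_infty 0)
    by apply is_lim_scal_l_0, phiinv_psi_phiinv_lim.
  assert (HE : is_lim E p_infty 0).
  { apply (is_lim_0_of_deriv_plus_scal E _ delta 0 delta_pos is_derive_E).
    apply (is_lim_ext_loc (fun t => c * (phiinv t * psi (phiinv t)))); [|exact Hforcing].
    exists 0. intros t _. unfold E. ring. }
  apply (deriv_at_infty_zero_intro _ _ is_derive_E).
  apply is_lim_plus_0; [apply is_lim_scal_l_0, HE | exact Hforcing].
Qed.

Lemma deriv_at_infty_zero_I :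
  deriv_at_infty_zero (I_of beta gamma delta St Et Rt N u0 psi phiinv).
Proof.
  eapply (deriv_at_infty_zero_const_sub3 N);
    [| exact deriv_at_infty_zero_S | exact deriv_at_infty_zero_R | exact deriv_at_infty_zero_E].
  intros t. unfold I_of, S_of, R_of. ring.
Qed.

End SEIR.

End Phi_inverse.

Lemma seir_forcing_lim (beta gamma delta N c alpha : R) :
  0 < gamma -> alpha = N - c * exp (- (beta / gamma) * alpha) ->
  is_lim (fun u => delta * (beta * N - beta * c * u + gamma * ln u))
    (exp (- (beta / gamma) * alpha)) 0.
Proof.
  intros Hg Halpha.
  set (F := fun u => delta * (beta * N - beta * c * u + gamma * ln u)).
  set (uinf := exp (- (beta / gamma) * alpha)).
  assert (HF : F uinf = 0).
  { unfold F, uinf. rewrite ln_exp.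
    replace (beta * N - beta * c * exp (- (beta / gamma) * alpha)
             + gamma * (- (beta / gamma) * alpha))
      with (beta * (N - c * exp (- (beta / gamma) * alpha) - alpha)) by (field; lra).
    rewrite <- Halpha. ring. }
  rewrite <- HF. apply is_lim_continuity, continuity_pt_filterlim.
  apply (ex_derive_continuous (V := R_NormedModule)).
  unfold F. auto_derive. apply exp_pos.
Qed.

Theorem theorem13
  (beta gamma delta St Et It Rt alpha : R) (psi phiinv : R -> R) :
  let N := St + Et + It + Rt in
  0 < beta -> 0 < gamma -> 0 < delta -> 0 < N ->
  (* (A1)-(A4) *)
  0 < It ->
  Et > (gamma / delta) * It ->
  St > delta * Et / (beta * It) ->
  0 <= Rt -> N > St * exp ((beta / gamma) * Rt) + Rt ->
  (* alpha: the solution in (Rt, N) of x = N - St e^{(b/g)Rt} e^{-(b/g)x} *)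
  Rt < alpha < N ->
  alpha = N - St * exp ((beta / gamma) * Rt) * exp (- (beta / gamma) * alpha) ->
  (* (A5) *)
  St < (gamma / beta) * exp ((beta / gamma) * (alpha - Rt)) ->
  let u0 := exp (- (beta / gamma) * Rt) in
  let uinf := exp (- (beta / gamma) * alpha) in
  (* psi: continuous and positive on (uinf, u0], C^1 on (uinf, u0), solves the ODE *)
  cont_on_Ioc psi uinf u0 ->
  (forall u, uinf < u <= u0 -> 0 < psi u) ->
  C1_on_Ioo psi uinf u0 ->
  (forall u, uinf < u < u0 ->
     Derive psi u * psi u - (gamma + delta) / u * psi u
     = - delta * ((beta * N - beta * St * exp ((beta / gamma) * Rt) * u
                   + gamma * ln u) / u)) ->
  psi u0 = beta * It ->
  (* phiinv: the inverse of phi : (uinf, u0] -> [0, oo) *)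
  (forall t, 0 <= t -> uinf < phiinv t <= u0 /\ phi_of psi u0 (phiinv t) = t) ->
  deriv_at_infty_zero (S_of beta gamma St Rt phiinv) /\
  deriv_at_infty_zero (E_of beta gamma delta St Et Rt u0 psi phiinv) /\
  deriv_at_infty_zero (I_of beta gamma delta St Et Rt N u0 psi phiinv) /\
  deriv_at_infty_zero (R_of beta gamma phiinv).
Proof.
  (* (A1)-(A5) and psi u0 = beta It only serve to construct alpha, psi and phiinv,
     which are given here. *)
  intros N Hb Hg Hd _ _ _ _ _ _ [HRa _] Halpha _ u0 uinf Hcont Hpos HC1 Hode _ Hinv.
  assert (Huinf : 0 < uinf) by apply exp_pos.
  assert (Hu : uinf < u0).
  { apply exp_increasing. assert (0 < beta / gamma) by (apply Rdiv_lt_0_compat; lra). nra. }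
  set (c := St * exp ((beta / gamma) * Rt)) in Halpha.
  assert (Hvanish : filterlim psi (at_right uinf) (locally 0)).
  { apply (psi_lim uinf u0 psi phiinv Huinf Hu Hcont Hpos Hinv (gamma + delta)
      (fun u => delta * (beta * N - beta * c * u + gamma * ln u))); [lra | | |].
    - now apply seir_forcing_lim.
    - intros u Hu'. apply HC1, Hu'.
    - intros u Hu'.
      replace (Derive psi u * psi u * u) with
        ((Derive psi u * psi u - (gamma + delta) / u * psi u) * u + (gamma + delta) * psi u)
        by (field; lra).
      rewrite Hode by exact Hu'. unfold c. field. lra. }
  split; [|split; [|split]].
  - now apply (deriv_at_infty_zero_S uinf u0 psi).
  - now apply (deriv_at_infty_zero_E uinf u0 psi).
  - now apply (deriv_at_infty_zero_I uinf u0 psi).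
  - now apply (deriv_at_infty_zero_R uinf u0 psi).
Qed.
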